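(* Let $n\ge 10$ be an integer and let $\mathcal{F}_n=\{\,|E(F_n(a,b))| : a,b \text{ integers},\ a\ge 0,\ b\ge 2,\ a+b+5\le n\,\}$. Then $$\left[3n-11, \left\lfloor \frac{n-1}{2} \right\rfloor \left\lceil \frac{n-1}{2} \right\rceil +2\right]\subseteq \mathcal{F}_n.$$
   Context: All graphs are finite and simple. For integers $p\le q$, $[p,q]$ denotes $\{p,p+1,\dots,q\}$. For nonnegative integers $n,a,b$ with $n\ge a+b+5$, the graph $F_n(a,b)$ is defined as follows. Its vertex set is the disjoint union $I\cup A_1\cup A_2\cup B_1\cup B_2\cup C$, where $I=\{x\}$, $A_1=\{u_1,u_2\}$, $B_1=\{v_1,v_2\}$, $|A_2|=a$, $|B_2|=b$, $|C|=n-a-b-5$. Its edges are: all pairs between $A_1\cup A_2\cup C$ and $B_2$; all pairs between $A_2$ and $B_1$; all pairs between $x$ and $A_1\cup B_1\cup C$; and the two edges $u_1v_1$ and $u_2v_2$. There are no other edges. (Its number of edges is $b(n-b-3)+n+a-b+1$.) *)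

From mathcomp Require Import all_boot.
Set Implicit Arguments. Unset Strict Implicit. Unset Printing Implicit Defensive.

(* The graph F_n(a,b) on vertex set 'I_n (= {0,...,n-1}), with the parts:
     I  = {0}            (x)
     A1 = {1,2}          (u1 = 1, u2 = 2)
     B1 = {3,4}          (v1 = 3, v2 = 4)
     A2 = [5, 5+a-1]
     B2 = [5+a, 5+a+b-1]
     C  = [5+a+b, n-1]   (size n-a-b-5). *)
Definition inX (i : nat) : bool := i == 0.
Definition inA1 (i : nat) : bool := (i == 1) || (i == 2).
Definition inB1 (i : nat) : bool := (i == 3) || (i == 4).
Definition inA2 (a i : nat) : bool := (5 <= i) && (i < 5 + a).
Definition inB2 (a b i : nat) : bool := (5 + a <= i) && (i < 5 + a + b).
Definition inC (a b i : nat) : bool := 5 + a + b <= i.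

Definition Fbase (a b i j : nat) : bool :=
  [|| (inA1 i || inA2 a i || inC a b i) && inB2 a b j,
      inA2 a i && inB1 j,
      inX i && (inA1 j || inB1 j || inC a b j),
      (i == 1) && (j == 3)
    | (i == 2) && (j == 4)].

Definition Fadj (a b i j : nat) : bool :=
  (i != j) && (Fbase a b i j || Fbase a b j i).

Definition Fn_edges (n a b : nat) : nat :=
  #|[set e : 'I_n * 'I_n | (e.1 < e.2) && Fadj a b e.1 e.2]|.

From mathcomp Require Import all_boot zify.

(* For fixed b the edge count b(n-b-3) + n + a - b + 1 of F_n(a,b) is
   a plus a constant, so as a runs over [0, n-b-5] it fills an interval I_b.
   Consecutive intervals I_b and I_(b+1) overlap or touch, hence the union of the
   I_b for 2 <= b <= h - 2, with h = floor((n-1)/2), is the single interval from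
   |E(F_n(0,2))| = 3n - 11 up to the top of I_(h-2), which is h * ceil((n-1)/2) + 2.
   The edge count is obtained by summing, over the vertices j, the number of
   neighbours below j, which is constant on each of the parts A2, B2 and C. *)

Lemma interval_chain (lo hi : nat -> nat) (b0 B m : nat) :
  (forall b, b0 <= b < B -> lo b.+1 <= (hi b).+1) ->
  b0 <= B -> lo b0 <= m <= hi B ->
  exists2 b, b0 <= b <= B & lo b <= m <= hi b.
Proof.
elim: B => [|B IH] chain le_b0B /andP[lo_m m_hi].
  by exists b0; rewrite ?lo_m //; move: le_b0B; rewrite leqn0 => /eqP->.
have [lt_m_lo | ge_m_lo] := ltnP m (lo B.+1);
  last by exists B.+1; rewrite ?le_b0B ?ge_m_lo ?m_hi ?leqnn.
have [eq_b0 | ne_b0] := eqVneq b0 B.+1; first by move: lo_m; rewrite eq_b0 leqNgt lt_m_lo.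
have le_b0_B : b0 <= B by rewrite -ltnS ltn_neqAle ne_b0 le_b0B.
have m_hiB : m <= hi B.
  by rewrite -ltnS; apply: leq_trans lt_m_lo (chain B _); rewrite le_b0_B ltnSn.
have [b /andP[b0_b b_B] range_b] : exists2 b, b0 <= b <= B & lo b <= m <= hi b.
  apply: IH; rewrite ?le_b0_B ?lo_m ?m_hiB // => b /andP[b0_b b_B].
  by apply: chain; rewrite b0_b ltnW.
by exists b; rewrite ?b0_b ?range_b ?(leq_trans b_B (leqnSn B)).
Qed.

Lemma sum_ord_mem_itv (lo hi N : nat) :
  \sum_(i < N) ((lo <= i < hi) : nat) = minn hi N - lo.
Proof.
elim: N => [|N IH]; first by rewrite big_ord0; lia.
by rewrite big_ord_recr /= IH; lia.
Qed.

Lemma Fadj_lower (a b i j : nat) : 5 <= j -> i < j ->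
  Fadj a b i j = [|| inA2 a j && inB1 i,
                     inB2 a b j && (inA1 i || inA2 a i)
                   | inC a b j && (inX i || inB2 a b i)].
Proof.
move=> ge5_j lt_ij; rewrite /Fadj /Fbase /inX /inA1 /inB1 /inA2 /inB2 /inC.
have [-> -> -> ->] : [/\ j == 0 = false, j == 1 = false, j == 2 = false & j == 3 = false].
  by split; lia.
have [-> ->] : j == 4 = false /\ i != j by split; lia.
lia.
Qed.

Definition lower_deg (a b j : nat) : nat := \sum_(i < j) Fadj a b i j.

Lemma lower_deg_A2 (a b j : nat) : 5 <= j < 5 + a -> lower_deg a b j = 2.
Proof.
move=> A2j; rewrite /lower_deg (eq_bigr (fun i : 'I_j => (3 <= i < 5 : nat))).
  by rewrite sum_ord_mem_itv; lia.
move=> [i lt_ij] _ /=; rewrite Fadj_lower //; last lia.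
by rewrite /inX /inA1 /inB1 /inA2 /inB2 /inC; lia.
Qed.

Lemma lower_deg_B2 (a b j : nat) : 5 + a <= j < 5 + a + b -> lower_deg a b j = a + 2.
Proof.
move=> B2j; rewrite /lower_deg.
rewrite (eq_bigr (fun i : 'I_j => (1 <= i < 3 : nat) + (5 <= i < 5 + a))).
  by rewrite big_split !sum_ord_mem_itv /=; lia.
move=> [i lt_ij] _ /=; rewrite Fadj_lower //; last lia.
by rewrite /inX /inA1 /inB1 /inA2 /inB2 /inC; lia.
Qed.

Lemma lower_deg_C (a b j : nat) : 5 + a + b <= j -> lower_deg a b j = b + 1.
Proof.
move=> Cj; rewrite /lower_deg.
rewrite (eq_bigr (fun i : 'I_j => (0 <= i < 1 : nat) + (5 + a <= i < 5 + a + b))).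
  by rewrite big_split !sum_ord_mem_itv /=; lia.
move=> [i lt_ij] _ /=; rewrite Fadj_lower //; last lia.
by rewrite /inX /inA1 /inB1 /inA2 /inB2 /inC; lia.
Qed.

Lemma sum_lower_deg_lt5 (a b : nat) : \sum_(0 <= j < 5) lower_deg a b j = 6.
Proof. by rewrite /lower_deg !big_nat_recr //= big_geq // !big_ord_recr !big_ord0. Qed.

Lemma Fn_edges_sum_lower_deg (n a b : nat) :
  Fn_edges n a b = \sum_(j < n) lower_deg a b j.
Proof.
rewrite /Fn_edges -sum1_card big_mkcond /=.
rewrite (eq_bigr (fun e : 'I_n * 'I_n => ((e.1 < e.2) && Fadj a b e.1 e.2 : nat)));
  last by move=> e _; rewrite in_set; case: ifP.
rewrite -(pair_bigA _ (fun i j : 'I_n => ((i < j) && Fadj a b i j : nat))) exchange_big.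
apply: eq_bigr => j _; rewrite /lower_deg.
rewrite (big_ord_widen n (fun i => (Fadj a b i j : nat)) (ltnW (ltn_ord j))) [RHS]big_mkcond.
by apply: eq_bigr => i _; case: (i < j).
Qed.

Lemma Fn_edgesE (n a b : nat) : a + b + 5 <= n ->
  Fn_edges n a b = b * (n - b - 3) + n + a - b + 1.
Proof.
move=> le_n; rewrite Fn_edges_sum_lower_deg -(big_mkord xpredT).
rewrite (big_cat_nat (n := 5)) ?sum_lower_deg_lt5 //; last lia.
rewrite (big_cat_nat (m := 5) (n := 5 + a)) ?leq_addr //; last lia.
rewrite (big_cat_nat (m := 5 + a) (n := 5 + a + b)) ?leq_addr //; last lia.
rewrite (eq_big_nat _ _ (lower_deg_A2 a b)) (eq_big_nat _ _ (lower_deg_B2 a b)).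
rewrite (eq_big_nat _ _ (m := 5 + a + b) (F2 := fun=> b + 1));
  last by move=> j /andP[Cj _]; apply: lower_deg_C.
rewrite !sum_nat_const_nat /=; nia.
Qed.

Lemma Fn_edges_shift (n a b : nat) : a + b + 5 <= n ->
  Fn_edges n a b = Fn_edges n 0 b + a.
Proof. by move=> le_n; rewrite !Fn_edgesE; [move: (b * _) => p; lia | lia..]. Qed.

Lemma Fn_edges_interval (n b m : nat) : b + 5 <= n ->
  Fn_edges n 0 b <= m <= Fn_edges n (n - b - 5) b ->
  exists2 a, a + b + 5 <= n & Fn_edges n a b = m.
Proof.
move=> le_bn; rewrite (Fn_edges_shift n (n - b - 5) b) => [range_m|]; last lia.
by exists (m - Fn_edges n 0 b); [lia | rewrite Fn_edges_shift; lia].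
Qed.

Lemma Fn_edges_overlap (n b : nat) : b + 6 <= n ->
  Fn_edges n 0 b.+1 <= (Fn_edges n (n - b - 5) b).+1.
Proof. by move=> le_bn; rewrite !Fn_edgesE; lia. Qed.

Theorem lemma2p3 (n : nat) : 10 <= n ->
  forall m : nat,
    3 * n - 11 <= m <= (n - 1)./2 * uphalf (n - 1) + 2 ->
    exists a b : nat, [/\ 2 <= b, a + b + 5 <= n & Fn_edges n a b = m].
Proof.
move=> ge10_n m; set h := (n - 1)./2; set c := uphalf (n - 1) => range_m.
have c_def : c = odd (n - 1) + h := uphalf_half (n - 1).
have n_def : odd (n - 1) + h.*2 = n - 1 := odd_double_half (n - 1).
have [b /andP[ge2_b le_b_h] range_b] :
    exists2 b, 2 <= b <= h - 2 & Fn_edges n 0 b <= m <= Fn_edges n (n - b - 5) b.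
  apply: interval_chain.
  - by move=> b /andP[_ lt_b]; apply: Fn_edges_overlap; lia.
  - by lia.
  - by rewrite !Fn_edgesE; lia.
have [|a le_abn edges_m] := Fn_edges_interval n b m _ range_b; first lia.
by exists a, b.
Qed.
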